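(* Let $H$ be a Hopf algebra that is projective as a module over the commutative ring $k$. The following are equivalent: (1) the forgetful functor $F:{}^H\mathcal L_H\to\mathcal M_H$ is separable; (2) there exists a $k$-linear map $\gamma:H\to\mathrm{End}_k(H)$ that is right $H^*$-linear, i.e. $\gamma(h\leftharpoonup h^* )=\gamma(h)\circ(h^*\rightharpoonup -)$ for all $h\in H$, $h^*\in H^*$, such that $\gamma(h)(H)\subseteq Z(H)$ and $\sum\gamma(h_{(1)})(h_{(2)})=\varepsilon(h)1_H$ for all $h\in H$.
   Context: Sweedler notation $\Delta(h)=\sum h_{(1)}\otimes h_{(2)}$, $\rho(m)=\sum m_{<-1>}\otimes m_{<0>}$. ${}^H\mathcal L_H$ (Long dimodules) is the category of right $H$-modules $M$ with a left $H$-comodule structure such that $\rho(mh)=\sum m_{<-1>}\otimes m_{<0>}h$ for all $m,h$, with $H$-linear $H$-colinear maps; $F$ forgets the coaction. $h\leftharpoonup h^*=\sum\langle h^*,h_{(1)}\rangle h_{(2)}$ and $h^*\rightharpoonup l=\sum\langle h^*,l_{(2)}\rangle l_{(1)}$. $Z(H)$ is the center of $H$. A functor is separable if $\mathrm{Hom}(M,N)\to\mathrm{Hom}(FM,FN)$ has a left inverse natural in $M,N$. *)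

(* Tensor products are represented by finite lists of elementary tensors;
   two such lists denote the same element of the tensor product iff every
   multilinear map takes the same value on them (universal property). *)
From HB Require Import structures.
From mathcomp Require Import all_boot all_order all_algebra.
Set Implicit Arguments. Unset Strict Implicit. Unset Printing Implicit Defensive.
Import GRing.Theory.
Local Open Scope ring_scope.

Definition bilin (k : comNzRingType) (M N P : lmodType k) (b : M -> N -> P) :=
  (forall (a : k) x y n, b (a *: x + y) n = a *: b x n + b y n) /\
  (forall (a : k) m x y, b m (a *: x + y) = a *: b m x + b m y).

Definition trilin (k : comNzRingType) (M N Q P : lmodType k)
    (t : M -> N -> Q -> P) :=
  (forall (a : k) x y n q, t (a *: x + y) n q = a *: t x n q + t y n q) /\
  (forall (a : k) m x y q, t m (a *: x + y) q = a *: t m x q + t m y q) /\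
  (forall (a : k) m n x y, t m n (a *: x + y) = a *: t m n x + t m n y).

Definition teq (k : comNzRingType) (M N : lmodType k) (s s' : seq (M * N)) :=
  forall (P : lmodType k) (b : M -> N -> P), bilin b ->
    \sum_(p <- s) b p.1 p.2 = \sum_(p <- s') b p.1 p.2.

Definition tscale (k : comNzRingType) (M N : lmodType k) (a : k)
    (s : seq (M * N)) : seq (M * N) := [seq (a *: p.1, p.2) | p <- s].

(* H : algType k is a k-algebra; D is the comultiplication (Delta h given by a
   representative sum  \sum h_(1) (x) h_(2)), eps the counit, S the antipode. *)
Definition is_hopf (k : comNzRingType) (H : algType k)
    (D : H -> seq (H * H)) (eps : H -> k) (S : H -> H) : Prop :=
  (forall (a : k) x y, teq (D (a *: x + y)) (tscale a (D x) ++ D y)) /\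
  (* coassociativity : (Delta (x) id) Delta = (id (x) Delta) Delta *)
  (forall h (P : lmodType k) (t : H -> H -> H -> P), trilin t ->
     \sum_(p <- D h) \sum_(q <- D p.1) t q.1 q.2 p.2 =
     \sum_(p <- D h) \sum_(q <- D p.2) t p.1 q.1 q.2) /\
  (forall (a : k) x y, eps (a *: x + y) = a * eps x + eps y) /\
  (forall h, \sum_(p <- D h) eps p.1 *: p.2 = h) /\
  (forall h, \sum_(p <- D h) eps p.2 *: p.1 = h) /\
  (forall x y, teq (D (x * y)) [seq (p.1 * q.1, p.2 * q.2) | p <- D x, q <- D y]) /\
  teq (D 1) [:: (1, 1)] /\
  (forall x y, eps (x * y) = eps x * eps y) /\
  eps 1 = 1 /\
  (forall (a : k) x y, S (a *: x + y) = a *: S x + S y) /\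
  (forall h, \sum_(p <- D h) S p.1 * p.2 = eps h *: 1) /\
  (forall h, \sum_(p <- D h) p.1 * S p.2 = eps h *: 1).

Definition projective_module (k : comNzRingType) (V : lmodType k) : Prop :=
  forall (M N : lmodType k) (g : M -> N),
    (forall (a : k) x y, g (a *: x + y) = a *: g x + g y) ->
    (forall n, exists m, g m = n) ->
    forall f : V -> N,
    (forall (a : k) x y, f (a *: x + y) = a *: f x + f y) ->
    exists f' : V -> M,
      (forall (a : k) x y, f' (a *: x + y) = a *: f' x + f' y) /\
      (forall v, g (f' v) = f v).

Definition dimod_axioms (k : comNzRingType) (H : algType k)
    (D : H -> seq (H * H)) (eps : H -> k) (M : lmodType k)
    (act : M -> H -> M) (rho : M -> seq (H * M)) : Prop :=
  (forall (a : k) m m' h, act (a *: m + m') h = a *: act m h + act m' h) /\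
  (forall (a : k) m h h', act m (a *: h + h') = a *: act m h + act m h') /\
  (forall m, act m 1 = m) /\
  (forall m x y, act (act m x) y = act m (x * y)) /\
  (forall (a : k) m m', teq (rho (a *: m + m')) (tscale a (rho m) ++ rho m')) /\
  (forall m (P : lmodType k) (t : H -> H -> M -> P), trilin t ->
     \sum_(p <- rho m) \sum_(q <- D p.1) t q.1 q.2 p.2 =
     \sum_(p <- rho m) \sum_(q <- rho p.2) t p.1 q.1 q.2) /\
  (forall m, \sum_(p <- rho m) eps p.1 *: p.2 = m) /\
  (* Long compatibility: rho (m h) = \sum m_<-1> (x) m_<0> h *)
  (forall m h, teq (rho (act m h)) [seq (p.1, act p.2 h) | p <- rho m]).

Record dimod (k : comNzRingType) (H : algType k)
    (D : H -> seq (H * H)) (eps : H -> k) := Dimod {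
  dm_sort : lmodType k;
  dm_act : dm_sort -> H -> dm_sort;
  dm_rho : dm_sort -> seq (H * dm_sort);
  dm_ax : dimod_axioms D eps dm_act dm_rho }.

(* morphisms in M_H between F M and F N : k-linear, right H-linear *)
Definition hlin (k : comNzRingType) (H : algType k) (D : H -> seq (H * H))
    (eps : H -> k) (M N : dimod D eps) (f : dm_sort M -> dm_sort N) : Prop :=
  (forall (a : k) x y, f (a *: x + y) = a *: f x + f y) /\
  (forall m h, f (dm_act m h) = dm_act (f m) h).

(* morphisms in ^H L_H : moreover H-colinear *)
Definition dimor (k : comNzRingType) (H : algType k) (D : H -> seq (H * H))
    (eps : H -> k) (M N : dimod D eps) (f : dm_sort M -> dm_sort N) : Prop :=
  hlin f /\
  (forall m, teq (dm_rho (f m)) [seq (p.1, f p.2) | p <- dm_rho m]).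

Definition forgetful_separable (k : comNzRingType) (H : algType k)
    (D : H -> seq (H * H)) (eps : H -> k) : Prop :=
  exists P : forall M N : dimod D eps,
               (dm_sort M -> dm_sort N) -> (dm_sort M -> dm_sort N),
    (forall M N f, @hlin _ _ D eps M N f -> dimor (P M N f)) /\
    (forall M N f, @dimor _ _ D eps M N f -> P M N f =1 f) /\
    (forall (M M' N N' : dimod D eps) (g : dm_sort M' -> dm_sort M)
            (h : dm_sort N -> dm_sort N') (f : dm_sort M -> dm_sort N),
       dimor g -> dimor h -> hlin f ->
       P M' N' (h \o f \o g) =1 h \o P M N f \o g).

Definition klinear_form (k : comNzRingType) (H : algType k) (hs : H -> k) :=
  forall (a : k) x y, hs (a *: x + y) = a * hs x + hs y.

Definition rharp (k : comNzRingType) (H : algType k) (D : H -> seq (H * H))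
    (h : H) (hs : H -> k) : H := \sum_(p <- D h) hs p.1 *: p.2.

Definition lharp (k : comNzRingType) (H : algType k) (D : H -> seq (H * H))
    (hs : H -> k) (l : H) : H := \sum_(p <- D l) hs p.2 *: p.1.

Definition gamma_condition (k : comNzRingType) (H : algType k)
    (D : H -> seq (H * H)) (eps : H -> k) (gamma : H -> H -> H) : Prop :=
  (forall (a : k) x y l, gamma (a *: x + y) l = a *: gamma x l + gamma y l) /\
  (forall h (a : k) x y, gamma h (a *: x + y) = a *: gamma h x + gamma h y) /\
  (forall h (hs : H -> k), klinear_form hs ->
     forall l, gamma (rharp D h hs) l = gamma h (lharp D hs l)) /\
  (forall h l x, gamma h l * x = x * gamma h l) /\
  (forall h, \sum_(p <- D h) gamma p.1 p.2 = eps h *: 1).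

From HB Require Import structures.
From mathcomp Require Import all_boot all_order all_algebra.
From mathcomp Require Import boolp.
From mathcomp Require finmap.
From mathcomp.multinomials Require monalg.
Set Implicit Arguments. Unset Strict Implicit. Unset Printing Implicit Defensive.
Import GRing.Theory.
Local Open Scope ring_scope.

(* (2) => (1): for an H-linear f : M -> N, the map
   P(f)(m) = \sum f(m_<0>)_<0> gamma(m_<-1>)(f(m_<0>)_<-1>)
   is H-linear because gamma takes central values, H-colinear because gamma is
   right H^*-linear, equal to f when f is colinear because of the counit
   condition, and natural in M and N.
   (1) => (2): H (x) M, with coaction Delta (x) id and H acting on M, is a Long
   dimodule; the coaction rho : M -> H (x) M is a dimodule map with H-linear
   retraction eps (x) id, so nu_M := P(eps (x) id) is a natural retraction of
   rho in the category of dimodules. Evaluating nu at H (x) H (x) H on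
   x (x) y (x) 1 defines gamma(x)(y); naturality with respect to left
   multiplications and to h^* -> _ gives centrality and H^*-linearity, and
   nu rho = id gives the counit condition.
   Throughout, projectivity of H is what turns equalities of contractions
   against all linear forms on H into equalities in H (x) _. *)

Section LinearFunctions.
Variable k : comNzRingType.

Section OneMap.
Variables (M N : lmodType k) (f : M -> N).
Hypothesis f_lin : linear f.

Lemma lin0 : f 0 = 0.
Proof.
have E := f_lin 1 0 0; rewrite !scale1r addr0 in E.
by apply: (addrI (f 0)); rewrite addr0 -E.
Qed.

Lemma linD x y : f (x + y) = f x + f y.
Proof. by have := f_lin 1 x y; rewrite !scale1r. Qed.

Lemma linZ a x : f (a *: x) = a *: f x.
Proof. by have := f_lin a x 0; rewrite !addr0 lin0 addr0. Qed.

Lemma lin_sum (I : Type) (r : seq I) (F : I -> M) :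
  f (\sum_(i <- r) F i) = \sum_(i <- r) f (F i).
Proof. exact: (big_morph f linD lin0). Qed.

End OneMap.

Lemma lin_comp (M N P : lmodType k) (f : N -> P) (g : M -> N) :
  linear f -> linear g -> linear (f \o g).
Proof. by move=> Hf Hg a x y /=; rewrite Hg Hf. Qed.

Lemma lin_sumr (M N : lmodType k) (I : Type) (r : seq I) (F : I -> M -> N) :
  (forall i, linear (F i)) -> linear (fun m => \sum_(i <- r) F i m).
Proof.
move=> HF a x y; rewrite scaler_sumr -big_split /=.
by apply: eq_bigr => i _; rewrite HF.
Qed.

Lemma lin_scale (M N : lmodType k) (c : k) (f : M -> N) :
  linear f -> linear (fun m => c *: f m).
Proof. by move=> Hf a x y; rewrite Hf scalerDr !scalerA mulrC. Qed.

Lemma lin_form (H : algType k) (V : lmodType k) (hs : H -> k) (v : V) :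
  klinear_form hs -> linear (fun x => hs x *: v).
Proof. by move=> Hh a x y; rewrite Hh scalerDl scalerA. Qed.

Section LinearForm.
Variables (H : algType k) (hs : H -> k).
Hypothesis hs_lin : klinear_form hs.

Lemma formZ a x : hs (a *: x) = a * hs x.
Proof. exact: (linZ (hs_lin : linear (hs : H -> k^o))). Qed.

Lemma form_sum (I : Type) (r : seq I) (F : I -> H) :
  hs (\sum_(i <- r) F i) = \sum_(i <- r) hs (F i).
Proof. exact: (lin_sum (hs_lin : linear (hs : H -> k^o))). Qed.

End LinearForm.

Section Multilinear.
Variables (M N Q P : lmodType k).

Lemma bilinP (b : M -> N -> P) :
  (forall n, linear (b^~ n)) -> (forall m, linear (b m)) -> bilin b.
Proof. by move=> H1 H2; split=> *; [apply: H1 | apply: H2]. Qed.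

Lemma bilin_linl (b : M -> N -> P) n : bilin b -> linear (b^~ n).
Proof. by case=> + _ a x y; apply. Qed.

Lemma bilin_linr (b : M -> N -> P) m : bilin b -> linear (b m).
Proof. by case=> _ + a x y; apply. Qed.

Lemma trilinP (t : M -> N -> Q -> P) :
  (forall n q, linear (fun m => t m n q)) ->
  (forall m q, linear (fun n => t m n q)) ->
  (forall m n, linear (t m n)) -> trilin t.
Proof. by move=> H1 H2 H3; split; [|split] => *; [apply: H1 | apply: H2 | apply: H3]. Qed.

Section Trilinear.
Variables (t : M -> N -> Q -> P).
Hypothesis t_trilin : trilin t.

Lemma trilin_bilin12 q : bilin (fun m n => t m n q).
Proof. by case: t_trilin => H1 [H2 _]; split=> *; [apply: H1 | apply: H2]. Qed.

Lemma trilin_bilin23 m : bilin (t m).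
Proof. by case: t_trilin => _ [H2 H3]; split=> *; [apply: H2 | apply: H3]. Qed.

End Trilinear.

End Multilinear.

End LinearFunctions.

Section Tensor.
Variables (k : comNzRingType) (H : algType k).

Definition form := {hs : H -> k | klinear_form hs}.

Definition contract (V : lmodType k) (s : seq (H * V)) (hs : H -> k) : V :=
  \sum_(p <- s) hs p.1 *: p.2.

Variable V : lmodType k.

(* An element t of H (x) V is encoded by its contractions (hs (x) id) t,
   hs ranging over the linear forms on H. *)
Record tensor := Tensor {
  tcontract : form -> V;
  tcontractP : exists s, forall hs : form, tcontract hs = contract s (sval hs) }.

Lemma tensor_ext (t1 t2 : tensor) :
  (forall hs, tcontract t1 hs = tcontract t2 hs) -> t1 = t2.
Proof.
case: t1 t2 => f1 P1 [f2 P2] /= E.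
have ? : f1 = f2 := funext E; subst.
by rewrite (Prop_irrelevance P1 P2).
Qed.

Definition tzero : tensor.
Proof. by exists (fun _ => 0); exists [::] => hs; rewrite /contract big_nil. Defined.

Definition tadd (t1 t2 : tensor) : tensor.
Proof.
exists (fun hs => tcontract t1 hs + tcontract t2 hs).
case: (tcontractP t1) => s1 E1; case: (tcontractP t2) => s2 E2.
by exists (s1 ++ s2) => hs; rewrite /contract big_cat E1 E2.
Defined.

Definition topp (t : tensor) : tensor.
Proof.
exists (fun hs => - tcontract t hs).
case: (tcontractP t) => s E; exists [seq (p.1, - p.2) | p <- s] => hs.
by rewrite /contract big_map E -sumrN; apply: eq_bigr => p _; rewrite scalerN.
Defined.

Definition tscal (a : k) (t : tensor) : tensor.
Proof.
exists (fun hs => a *: tcontract t hs).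
case: (tcontractP t) => s E; exists [seq (p.1, a *: p.2) | p <- s] => hs.
rewrite /contract big_map E scaler_sumr; apply: eq_bigr => p _.
by rewrite !scalerA mulrC.
Defined.

Lemma taddA : associative tadd.
Proof. by move=> *; apply: tensor_ext => hs /=; rewrite addrA. Qed.
Lemma taddC : commutative tadd.
Proof. by move=> *; apply: tensor_ext => hs /=; rewrite addrC. Qed.
Lemma tadd0 : left_id tzero tadd.
Proof. by move=> *; apply: tensor_ext => hs /=; rewrite add0r. Qed.
Lemma taddN : left_inverse tzero topp tadd.
Proof. by move=> *; apply: tensor_ext => hs /=; rewrite addNr. Qed.

HB.instance Definition _ := gen_eqMixin tensor.
HB.instance Definition _ := gen_choiceMixin tensor.
HB.instance Definition _ := GRing.isZmodule.Build tensor taddA taddC tadd0 taddN.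

Lemma tscalA a b t : tscal a (tscal b t) = tscal (a * b) t.
Proof. by apply: tensor_ext => hs /=; rewrite scalerA. Qed.
Lemma tscal1 : left_id 1 tscal.
Proof. by move=> t; apply: tensor_ext => hs /=; rewrite scale1r. Qed.
Lemma tscalDr : right_distributive tscal +%R.
Proof. by move=> a u v; apply: tensor_ext => hs /=; rewrite scalerDr. Qed.
Lemma tscalDl t : {morph tscal^~ t : a b / a + b}.
Proof. by move=> a b; apply: tensor_ext => hs /=; rewrite scalerDl. Qed.

HB.instance Definition _ :=
  GRing.Zmodule_isLmodule.Build k tensor tscalA tscal1 tscalDr tscalDl.

Lemma tcontractD (t1 t2 : tensor) hs :
  tcontract (t1 + t2) hs = tcontract t1 hs + tcontract t2 hs.
Proof. by []. Qed.

Lemma tcontractZ a (t : tensor) hs : tcontract (a *: t) hs = a *: tcontract t hs.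
Proof. by []. Qed.

Lemma tcontract_lin hs : linear (fun t : tensor => tcontract t hs).
Proof. by []. Qed.

Lemma tcontract_sum (I : Type) (r : seq I) (F : I -> tensor) hs :
  tcontract (\sum_(i <- r) F i) hs = \sum_(i <- r) tcontract (F i) hs.
Proof. exact: (lin_sum (tcontract_lin hs)). Qed.

Definition trep (t : tensor) : seq (H * V) := proj1_sig (cid (tcontractP t)).

Lemma trepP t hs : tcontract t hs = contract (trep t) (sval hs).
Proof. by rewrite /trep; case: (cid _). Qed.

Lemma tcontract_ext (t : tensor) (h1 h2 : form) :
  sval h1 =1 sval h2 -> tcontract t h1 = tcontract t h2.
Proof. by move=> E; rewrite !trepP /contract; apply: eq_bigr => p _; rewrite E. Qed.

Definition tens (x : H) (v : V) : tensor.
Proof.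
exists (fun hs => sval hs x *: v).
by exists [:: (x, v)] => hs; rewrite /contract big_seq1.
Defined.

Lemma tcontract_tens x v hs : tcontract (tens x v) hs = sval hs x *: v.
Proof. by []. Qed.

Lemma tens_bilin : bilin tens.
Proof.
apply: bilinP => [v|x] a y z; apply: tensor_ext => -[hs Hhs] /=.
  by rewrite Hhs scalerDl scalerA.
by rewrite scalerDr !scalerA mulrC.
Qed.

Lemma tens_linl v : linear (tens^~ v).
Proof. exact: bilin_linl tens_bilin. Qed.

Lemma tens_linr x : linear (tens x).
Proof. exact: bilin_linr tens_bilin. Qed.

End Tensor.

Arguments tensor {k} H V.

Module DualBasis.
Import finmap monalg.

Section ProjectiveTensors.
Variables (k : comNzRingType) (H : algType k).
Hypothesis H_proj : projective_module H.

Definition msum (c : {malg k[H]}) : H := mmap (in_alg H) id c.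

Lemma msum_lin : linear msum.
Proof.
move=> a x y; rewrite /msum mmapD; congr (_ + _).
rewrite (@mmapEw _ _ _ _ _ (msupp x)) ?msuppZ_le // mmapE scaler_sumr.
by apply: eq_bigr => z _; rewrite mcoeffZ /= !mulr_algl scalerA.
Qed.

Lemma msum_surj v : exists c, msum c = v.
Proof. by exists << 1 *g v >>; rewrite /msum mmapU /= mulr_algl scale1r. Qed.

(* A section of the free presentation k[H] ->> H, i.e. a dual basis. *)
Lemma dual_basis : exists f : H -> {malg k[H]}, linear f /\ forall v, msum (f v) = v.
Proof.
have [f [Hf Hfg]] := H_proj msum_lin msum_surj (f := id) (fun _ _ _ => erefl).
by exists f.
Qed.

(* Expanding x = \sum_y (f x)@_y y in the dual basis, any bilinear b is
   determined by the contractions of its argument against the forms (f _)@_y. *)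
Lemma teq_contract (V : lmodType k) (s s' : seq (H * V)) :
  (forall hs : form H, contract s (sval hs) = contract s' (sval hs)) -> teq s s'.
Proof.
move=> E P b Hb.
have [f [Hf Hfg]] := dual_basis.
pose d := foldr (fun p acc => (msupp (f p.1) `|` acc)%fset) fset0 (s ++ s').
have supp_d p : p \in s ++ s' -> (msupp (f p.1) `<=` d)%fset.
  rewrite /d; elim: (s ++ s') p => [//|q l IH] p.
  rewrite inE => /orP [/eqP -> | /IH Hp] /=; first exact: fsubsetUl.
  exact: fsubset_trans Hp (fsubsetUr _ _).
have coord_form y : klinear_form (fun x : H => (f x)@_y).
  by move=> a x z; rewrite Hf mcoeffD mcoeffZ.
have expand x v : (msupp (f x) `<=` d)%fset ->
    b x v = \sum_(y <- d) b y ((f x)@_y *: v).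
  move=> Hx; rewrite -{1}(Hfg x) /msum (mmapEw Hx) (lin_sum (bilin_linl v Hb)).
  apply: eq_bigr => y _.
  by rewrite /= mulr_algl (linZ (bilin_linl v Hb)) (linZ (bilin_linr y Hb)).
have sum_expand l : (forall p, p \in l -> (msupp (f p.1) `<=` d)%fset) ->
    \sum_(p <- l) b p.1 p.2 = \sum_(y <- d) b y (contract l (fun x => (f x)@_y)).
  move=> Hl; rewrite (eq_big_seq _ (fun p Hp => expand p.1 p.2 (Hl p Hp))).
  rewrite exchange_big /=; apply: eq_bigr => y _.
  by rewrite /contract (lin_sum (bilin_linr y Hb)).
rewrite !sum_expand => [|p Hp|p Hp]; last 2 first.
- by apply: supp_d; rewrite mem_cat Hp orbT.
- by apply: supp_d; rewrite mem_cat Hp.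
by apply: eq_bigr => y _; rewrite (E (exist _ _ (coord_form y))).
Qed.

End ProjectiveTensors.

End DualBasis.
Import DualBasis.

Section HopfAxioms.
Variables (k : comNzRingType) (H : algType k) (D : H -> seq (H * H))
  (eps : H -> k) (S : H -> H).
Hypothesis hopf : is_hopf D eps S.

Lemma tscale_sum (M N P : lmodType k) (b : M -> N -> P) a s : bilin b ->
  \sum_(p <- tscale a s) b p.1 p.2 = a *: \sum_(p <- s) b p.1 p.2.
Proof.
move=> Hb; rewrite /tscale big_map scaler_sumr; apply: eq_bigr => p _.
by rewrite /= (linZ (bilin_linl _ Hb)).
Qed.

Lemma Delta_lin (P : lmodType k) (b : H -> H -> P) : bilin b ->
  linear (fun x => \sum_(q <- D x) b q.1 q.2).
Proof.
case: hopf => HD _ Hb a x y.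
by rewrite (HD a x y _ _ Hb) big_cat tscale_sum.
Qed.

Lemma coassoc (P : lmodType k) (t : H -> H -> H -> P) h : trilin t ->
  \sum_(p <- D h) \sum_(q <- D p.1) t q.1 q.2 p.2 =
  \sum_(p <- D h) \sum_(q <- D p.2) t p.1 q.1 q.2.
Proof. by case: hopf => _ [Hc _]; apply: Hc. Qed.

Lemma eps_lin : klinear_form eps.
Proof. by case: hopf => _ [_ []]. Qed.

Lemma counitl h : \sum_(p <- D h) eps p.1 *: p.2 = h.
Proof. by case: hopf => _ [_ [_ []]]. Qed.

Lemma counitr h : \sum_(p <- D h) eps p.2 *: p.1 = h.
Proof. by case: hopf => _ [_ [_ [_ []]]]. Qed.

Lemma Delta1 : teq (D 1) [:: (1, 1)].
Proof. by case: hopf => _ [_ [_ [_ [_ [_ []]]]]]. Qed.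

Lemma eps1 : eps 1 = 1.
Proof. by case: hopf => _ [_ [_ [_ [_ [_ [_ [_ []]]]]]]]. Qed.

End HopfAxioms.

Section DimoduleAxioms.
Variables (k : comNzRingType) (H : algType k) (D : H -> seq (H * H))
  (eps : H -> k).

Section Dimodule.
Variable M : dimod D eps.
Local Notation act := (@dm_act _ _ _ _ M).
Local Notation rho := (@dm_rho _ _ _ _ M).

Lemma act_linl h : linear (act^~ h).
Proof. by case: (dm_ax M) => + _ a x y; apply. Qed.

Lemma act_linr m : linear (act m).
Proof. by case: (dm_ax M) => _ [+ _] a x y; apply. Qed.

Lemma act1 m : act m 1 = m.
Proof. by case: (dm_ax M) => _ [_ []]. Qed.

Lemma actA m x y : act (act m x) y = act m (x * y).
Proof. by case: (dm_ax M) => _ [_ [_ []]]. Qed.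

Lemma coaction_lin (P : lmodType k) (b : H -> dm_sort M -> P) : bilin b ->
  linear (fun m => \sum_(p <- rho m) b p.1 p.2).
Proof.
case: (dm_ax M) => _ [_ [_ [_ [HD _]]]] Hb a x y.
by rewrite (HD a x y _ _ Hb) big_cat tscale_sum.
Qed.

Lemma coaction_coassoc (P : lmodType k) (t : H -> H -> dm_sort M -> P) m :
  trilin t ->
  \sum_(p <- rho m) \sum_(q <- D p.1) t q.1 q.2 p.2 =
  \sum_(p <- rho m) \sum_(q <- rho p.2) t p.1 q.1 q.2.
Proof. by case: (dm_ax M) => _ [_ [_ [_ [_ [Hc _]]]]]; apply: Hc. Qed.

Lemma coaction_counit m : \sum_(p <- rho m) eps p.1 *: p.2 = m.
Proof. by case: (dm_ax M) => _ [_ [_ [_ [_ [_ []]]]]]. Qed.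

Lemma coaction_act (P : lmodType k) (b : H -> dm_sort M -> P) m h : bilin b ->
  \sum_(p <- rho (act m h)) b p.1 p.2 = \sum_(p <- rho m) b p.1 (act p.2 h).
Proof.
case: (dm_ax M) => _ [_ [_ [_ [_ [_ [_ Hc]]]]]] Hb.
by rewrite (Hc m h _ _ Hb) big_map.
Qed.

End Dimodule.

Section Morphisms.
Variables (M N : dimod D eps) (f : dm_sort M -> dm_sort N).

Lemma hlin_lin : hlin f -> linear f.
Proof. by case. Qed.

Lemma hlin_act : hlin f -> forall m h, f (dm_act m h) = dm_act (f m) h.
Proof. by case. Qed.

Lemma dimor_lin : dimor f -> linear f.
Proof. by case=> [[]]. Qed.

Lemma dimor_coaction : dimor f ->
  forall (P : lmodType k) (b : H -> dm_sort N -> P) m, bilin b ->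
  \sum_(p <- dm_rho (f m)) b p.1 p.2 = \sum_(p <- dm_rho m) b p.1 (f p.2).
Proof. by case=> _ Hc P b m Hb; rewrite (Hc m _ _ Hb) big_map. Qed.

End Morphisms.

Lemma dimor_id (M : dimod D eps) : dimor (@id (dm_sort M)).
Proof. by split=> [|m P b Hb]; [split | rewrite big_map]. Qed.

End DimoduleAxioms.

Section SeparableFromGamma.
Variables (k : comNzRingType) (H : algType k) (D : H -> seq (H * H))
  (eps : H -> k).
Hypothesis H_proj : projective_module H.
Variable gamma : H -> H -> H.
Hypothesis gammaP : gamma_condition D eps gamma.

Lemma gamma_linl l : linear (gamma^~ l).
Proof. by case: gammaP => + _ a x y; apply. Qed.

Lemma gamma_linr x : linear (gamma x).
Proof. by case: gammaP => _ [+ _] a u y; apply. Qed.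

Lemma gamma_harp h hs : klinear_form hs ->
  forall l, gamma (rharp D h hs) l = gamma h (lharp D hs l).
Proof. by case: gammaP => _ [_ [+ _]]; apply. Qed.

Lemma gamma_central h l x : gamma h l * x = x * gamma h l.
Proof. by case: gammaP => _ [_ [_ []]]. Qed.

Lemma gamma_counit h : \sum_(p <- D h) gamma p.1 p.2 = eps h *: 1.
Proof. by case: gammaP => _ [_ [_ []]]. Qed.

(* Right H^*-linearity of gamma, read through the contractions of H (x) H;
   projectivity turns it into an identity of tensors. *)
Lemma gamma_Delta_swap (x y : H) :
  teq [seq (r.2, gamma x r.1) | r <- D y] [seq (r.1, gamma r.2 y) | r <- D x].
Proof.
apply: teq_contract => // -[hs Hhs]; rewrite /contract !big_map /=.
have -> : \sum_(r <- D y) hs r.2 *: gamma x r.1 = gamma x (lharp D hs y).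
  rewrite /lharp (lin_sum (gamma_linr x)).
  by apply: eq_bigr => r _; rewrite (linZ (gamma_linr x)).
have -> : \sum_(r <- D x) hs r.1 *: gamma r.2 y = gamma (rharp D x hs) y.
  rewrite /rharp (lin_sum (gamma_linl y)).
  by apply: eq_bigr => r _; rewrite (linZ (gamma_linl y)).
by rewrite gamma_harp.
Qed.

Lemma act_gamma_bilin (N : dimod D eps) x :
  bilin (fun (y : H) (n : dm_sort N) => dm_act n (gamma x y)).
Proof.
apply: bilinP => [n|y]; last exact: act_linl.
exact: lin_comp (act_linr n) (gamma_linr x).
Qed.

Arguments act_gamma_bilin {N} x.

Section Retraction.
Variables (M N : dimod D eps) (f : dm_sort M -> dm_sort N).

Definition retract_term (x : H) (m : dm_sort M) : dm_sort N :=
  \sum_(q <- dm_rho (f m)) dm_act q.2 (gamma x q.1).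

Definition retract (m : dm_sort M) : dm_sort N :=
  \sum_(p <- dm_rho m) retract_term p.1 p.2.

Lemma retract_term_bilin : linear f -> bilin retract_term.
Proof.
move=> Hf; apply: bilinP => [m|x].
  by apply: lin_sumr => q; exact: lin_comp (act_linr q.2) (gamma_linl q.1).
rewrite /retract_term; exact: lin_comp (coaction_lin (act_gamma_bilin x)) Hf.
Qed.

Hypothesis f_hlin : hlin f.

Lemma retract_hlin : hlin retract.
Proof.
have Hf := hlin_lin f_hlin.
split=> [|m h]; first exact: coaction_lin (retract_term_bilin Hf).
rewrite /retract (coaction_act _ _ (retract_term_bilin Hf)) (lin_sum (act_linl h)).
apply: eq_bigr => p _; rewrite /retract_term (hlin_act f_hlin).
rewrite (coaction_act _ _ (act_gamma_bilin _)) (lin_sum (act_linl h)).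
by apply: eq_bigr => q _; rewrite !actA gamma_central.
Qed.

Lemma retract_colin m :
  teq (dm_rho (retract m)) [seq (p.1, retract p.2) | p <- dm_rho m].
Proof.
move=> P b Hb; have Hf := hlin_lin f_hlin.
have Ht := retract_term_bilin Hf.
rewrite big_map /retract (lin_sum (coaction_lin Hb)).
have outer : trilin (fun (a c : H) (m' : dm_sort M) => b a (retract_term c m')).
  apply: trilinP => [c n|a n|a c].
  - exact: bilin_linl Hb.
  - exact: lin_comp (bilin_linr a Hb) (bilin_linl n Ht).
  - exact: lin_comp (bilin_linr a Hb) (bilin_linr c Ht).
rewrite [RHS](eq_bigr _ (fun p _ => lin_sum (bilin_linr p.1 Hb) _ _)).
rewrite -(coaction_coassoc m outer); apply: eq_bigr => p _.
have inner : trilin (fun (a c : H) (n : dm_sort N) => b c (dm_act n (gamma p.1 a))).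
  apply: trilinP => [c n|a n|a c].
  - exact: lin_comp (bilin_linr c Hb) (lin_comp (act_linr n) (gamma_linr _)).
  - exact: bilin_linl Hb.
  - exact: lin_comp (bilin_linr c Hb) (act_linl _).
rewrite /retract_term (lin_sum (coaction_lin Hb)).
rewrite (eq_bigr _ (fun q _ => coaction_act _ _ Hb)).
rewrite -(coaction_coassoc (f p.2) inner).
rewrite [RHS](eq_bigr _ (fun q _ => lin_sum (bilin_linr q.1 Hb) _ _)).
rewrite [RHS]exchange_big /=; apply: eq_bigr => q _.
have Hbq : bilin (fun u v : H => b u (dm_act q.2 v)).
  apply: bilinP => [v|u]; first exact: bilin_linl Hb.
  exact: lin_comp (bilin_linr u Hb) (act_linr _).
by have := gamma_Delta_swap p.1 q.1 Hbq; rewrite !big_map.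
Qed.

End Retraction.

Lemma retract_dimor (M N : dimod D eps) (f : dm_sort M -> dm_sort N) :
  hlin f -> dimor (retract f).
Proof. by move=> Hf; split=> [|m]; [exact: retract_hlin | exact: retract_colin]. Qed.

Lemma retract_id (M N : dimod D eps) (f : dm_sort M -> dm_sort N) :
  dimor f -> retract f =1 f.
Proof.
move=> Hf m; have Hl := dimor_lin Hf.
have Ht : trilin (fun (a c : H) (m' : dm_sort M) => dm_act (f m') (gamma a c)).
  apply: trilinP => [c n|a n|a c].
  - exact: lin_comp (act_linr _) (gamma_linl _).
  - exact: lin_comp (act_linr _) (gamma_linr _).
  - exact: lin_comp (act_linl _) Hl.
rewrite /retract /retract_term.
rewrite (eq_bigr _ (fun p _ => dimor_coaction Hf _ (act_gamma_bilin _))).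
rewrite -(coaction_coassoc m Ht) -{2}(coaction_counit m) (lin_sum Hl).
apply: eq_bigr => p _.
by rewrite -(lin_sum (act_linr _)) gamma_counit (linZ (act_linr _)) act1 (linZ Hl).
Qed.

Lemma retract_natural (M M' N N' : dimod D eps) (g : dm_sort M' -> dm_sort M)
   (h : dm_sort N -> dm_sort N') (f : dm_sort M -> dm_sort N) :
   dimor g -> dimor h -> hlin f -> retract (h \o f \o g) =1 h \o retract f \o g.
Proof.
move=> Hg Hh Hf m /=; rewrite /retract.
rewrite (dimor_coaction Hg _ (retract_term_bilin (hlin_lin Hf))) (lin_sum (dimor_lin Hh)).
apply: eq_bigr => p _; rewrite /retract_term /=.
rewrite (dimor_coaction Hh _ (act_gamma_bilin _)) (lin_sum (dimor_lin Hh)).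
by apply: eq_bigr => q _; rewrite (hlin_act Hh.1).
Qed.

Lemma forgetful_separable_of_gamma : forgetful_separable D eps.
Proof.
exists (fun M N f => @retract M N f); split; [|split].
- exact: retract_dimor.
- exact: retract_id.
- exact: retract_natural.
Qed.

End SeparableFromGamma.

Section TensorDimodule.
Variables (k : comNzRingType) (H : algType k) (D : H -> seq (H * H))
  (eps : H -> k) (S : H -> H).
Hypothesis hopf : is_hopf D eps S.
Hypothesis H_proj : projective_module H.

Definition eps_form : form H := exist _ eps (eps_lin hopf).

Lemma contract_bilin (V : lmodType k) (hs : H -> k) : klinear_form hs ->
  bilin (fun (x : H) (v : V) => hs x *: v).
Proof.
move=> Hh; apply: bilinP => [v|x]; first exact: lin_form.
exact: lin_scale (fun v => v) _.
Qed.

Section Module.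
Variable M : dimod D eps.
Local Notation V := (dm_sort M).
Local Notation act := (@dm_act _ _ _ _ M).

Definition tact (t : tensor H V) (h : H) : tensor H V.
Proof.
exists (fun hs => act (tcontract t hs) h).
case: (tcontractP t) => s Hs; exists [seq (p.1, act p.2 h) | p <- s] => hs.
rewrite Hs /contract big_map (lin_sum (act_linl h)); apply: eq_bigr => p _.
by rewrite (linZ (act_linl h)).
Defined.

Lemma tcontract_act t h hs : tcontract (tact t h) hs = act (tcontract t hs) h.
Proof. by []. Qed.

Lemma tact_linl h : linear (tact^~ h).
Proof. by move=> a x y; apply: tensor_ext => hs /=; rewrite (act_linl h). Qed.

Lemma tact_tens y v h : tact (tens y v) h = tens y (act v h).
Proof.
by apply: tensor_ext => hs; rewrite tcontract_act !tcontract_tens (linZ (act_linl h)).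
Qed.

(* Delta (x) id, computed on a chosen representative of t. *)
Definition tcoact (t : tensor H V) : seq (H * tensor H V) :=
  [seq (q.1, tens q.2 p.2) | p <- trep t, q <- D p.1].

Definition tcoact_term (P : lmodType k) (b : H -> tensor H V -> P) (u : H) (v : V) :=
  \sum_(q <- D u) b q.1 (tens q.2 v).

Lemma tcoact_term_bilin (P : lmodType k) (b : H -> tensor H V -> P) :
  bilin b -> bilin (tcoact_term b).
Proof.
move=> Hb; apply: bilinP => [v|u].
  apply: (Delta_lin hopf (b := fun x y => b x (tens y v))).
  apply: bilinP => [y|x]; first exact: bilin_linl Hb.
  exact: lin_comp (bilin_linr x Hb) (tens_linl v).
by apply: lin_sumr => q; exact: lin_comp (bilin_linr q.1 Hb) (tens_linr q.2).
Qed.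

(* The coaction does not depend on the representative: by projectivity,
   any list with the same contractions gives the same sums. *)
Lemma tcoact_sum (P : lmodType k) (b : H -> tensor H V -> P) (t : tensor H V)
    (s : seq (H * V)) :
  bilin b -> (forall hs : form H, tcontract t hs = contract s (sval hs)) ->
  \sum_(p <- tcoact t) b p.1 p.2 = \sum_(p <- s) tcoact_term b p.1 p.2.
Proof.
move=> Hb Hs; rewrite /tcoact big_allpairs_dep /=.
apply: (teq_contract H_proj) (tcoact_term_bilin Hb) => hs.
by rewrite -Hs -trepP.
Qed.

Lemma tcoact_tens (P : lmodType k) (b : H -> tensor H V -> P) x v : bilin b ->
  \sum_(p <- tcoact (tens x v)) b p.1 p.2 = tcoact_term b x v.
Proof.
move=> Hb; rewrite (@tcoact_sum _ _ _ [:: (x, v)] Hb) ?big_seq1 //.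
by move=> hs; rewrite /contract big_seq1.
Qed.

Lemma tcoact_lin (P : lmodType k) (b : H -> tensor H V -> P) : bilin b ->
  linear (fun t => \sum_(p <- tcoact t) b p.1 p.2).
Proof.
move=> Hb a x y.
rewrite (@tcoact_sum _ _ _ ([seq (p.1, a *: p.2) | p <- trep x] ++ trep y) Hb).
  rewrite big_cat big_map (tcoact_sum Hb (trepP x)) (tcoact_sum Hb (trepP y)).
  congr (_ + _); rewrite scaler_sumr; apply: eq_bigr => p _ /=.
  by rewrite (linZ (bilin_linr _ (tcoact_term_bilin Hb))).
move=> hs; rewrite tcontractD tcontractZ /contract big_cat big_map /= !trepP.
rewrite /contract scaler_sumr.
by congr (_ + _); apply: eq_bigr => p _; rewrite !scalerA mulrC.
Qed.

Lemma tcoact_coassoc (P : lmodType k) (tr : H -> H -> tensor H V -> P) t :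
  trilin tr ->
  \sum_(p <- tcoact t) \sum_(q <- D p.1) tr q.1 q.2 p.2 =
  \sum_(p <- tcoact t) \sum_(q <- tcoact p.2) tr p.1 q.1 q.2.
Proof.
move=> Htr.
have Hb1 : bilin (fun x t' => \sum_(q <- D x) tr q.1 q.2 t').
  apply: bilinP => [t'|x].
    exact: (Delta_lin hopf (b := fun u w => tr u w t') (trilin_bilin12 Htr t')).
  by apply: lin_sumr => q; exact: bilin_linr q.2 (trilin_bilin23 Htr q.1).
have Hb2 : bilin (fun x t' => \sum_(q <- tcoact t') tr x q.1 q.2).
  apply: bilinP => [t'|x]; last exact: tcoact_lin (trilin_bilin23 Htr x).
  by apply: lin_sumr => q; exact: bilin_linl q.1 (trilin_bilin12 Htr q.2).
rewrite (tcoact_sum Hb1 (trepP t)) (tcoact_sum Hb2 (trepP t)).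
apply: eq_bigr => p _; rewrite /tcoact_term.
rewrite (eq_bigr _ (fun q _ => tcoact_tens _ _ (trilin_bilin23 Htr q.1))).
have Ht3 : trilin (fun u w z => tr u w (tens z p.2)).
  apply: trilinP => [w z|u z|u w].
  - exact: bilin_linl (trilin_bilin12 Htr _).
  - exact: bilin_linr (trilin_bilin12 Htr _).
  - exact: lin_comp (bilin_linr _ (trilin_bilin23 Htr _)) (tens_linl _).
rewrite /tcoact_term; exact: (coassoc hopf p.1 Ht3).
Qed.

Lemma tcoact_counit t : \sum_(p <- tcoact t) eps p.1 *: p.2 = t.
Proof.
apply: tensor_ext => -[hs Hhs]; rewrite tcontract_sum.
have Hb : bilin (fun x (t' : tensor H V) => eps x *: tcontract t' (exist _ hs Hhs)).
  apply: bilinP => [t'|x]; first exact: lin_form (eps_lin hopf).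
  exact: lin_scale (tcontract_lin _).
rewrite (tcoact_sum Hb (trepP t)) trepP /contract /=; apply: eq_bigr => p _.
rewrite /tcoact_term; under eq_bigr do rewrite tcontract_tens /= scalerA.
rewrite -scaler_suml; congr (_ *: _).
rewrite -{2}(counitl hopf p.1) (form_sum Hhs); apply: eq_bigr => q _.
by rewrite (formZ Hhs).
Qed.

Lemma tcoact_act t h :
  teq (tcoact (tact t h)) [seq (p.1, tact p.2 h) | p <- tcoact t].
Proof.
move=> P b Hb.
have Hb' : bilin (fun x t' => b x (tact t' h)).
  apply: bilinP => [t'|x]; first exact: bilin_linl Hb.
  exact: lin_comp (bilin_linr x Hb) (tact_linl h).
rewrite big_map (tcoact_sum Hb' (trepP t)).
rewrite (@tcoact_sum _ _ _ [seq (p.1, act p.2 h) | p <- trep t] Hb).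
  rewrite big_map; apply: eq_bigr => p _; apply: eq_bigr => q _.
  by rewrite tact_tens.
move=> hs; rewrite tcontract_act trepP /contract big_map (lin_sum (act_linl h)).
by apply: eq_bigr => p _; rewrite (linZ (act_linl h)).
Qed.

Lemma tensor_dimod_axioms : dimod_axioms D eps tact tcoact.
Proof.
split; first by move=> a m m' h; apply: tact_linl.
split; first by move=> a m x y; apply: tensor_ext => hs /=; rewrite (act_linr _).
split; first by move=> m; apply: tensor_ext => hs /=; rewrite act1.
split; first by move=> m x y; apply: tensor_ext => hs /=; rewrite actA.
split; first by move=> a m m' P b Hb; rewrite (tcoact_lin Hb) big_cat tscale_sum.
split; first by move=> t P tr Htr; apply: tcoact_coassoc.
split; first exact: tcoact_counit.
exact: tcoact_act.
Qed.

Definition tensor_dimod : dimod D eps :=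
  @Dimod _ _ D eps (tensor H V : lmodType k) tact tcoact tensor_dimod_axioms.

Definition coaction_map (m : V) : tensor H V.
Proof. by exists (fun hs => contract (dm_rho m) (sval hs)); exists (dm_rho m). Defined.

Lemma coaction_map_tens m : coaction_map m = \sum_(p <- dm_rho m) tens p.1 p.2.
Proof. by apply: tensor_ext => hs; rewrite tcontract_sum. Qed.

Lemma coaction_map_dimor : @dimor _ _ D eps M tensor_dimod coaction_map.
Proof.
split; first split.
- move=> a x y; apply: tensor_ext => -[hs Hhs] /=.
  by rewrite /contract (coaction_lin (contract_bilin _ Hhs)).
- move=> m h; apply: tensor_ext => -[hs Hhs]; rewrite /= /contract.
  rewrite (coaction_act _ _ (contract_bilin _ Hhs)) (lin_sum (act_linl h)).
  by apply: eq_bigr => p _; rewrite (linZ (act_linl h)).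
move=> m P b Hb; rewrite big_map /= (tcoact_sum Hb (s := dm_rho m)) //.
have Ht : trilin (fun (u w : H) (z : V) => b u (tens w z)).
  apply: trilinP => [w z|u z|u w].
  - exact: bilin_linl Hb.
  - exact: lin_comp (bilin_linr u Hb) (tens_linl z).
  - exact: lin_comp (bilin_linr u Hb) (tens_linr w).
rewrite /tcoact_term (coaction_coassoc m Ht); apply: eq_bigr => p _.
by rewrite coaction_map_tens (lin_sum (bilin_linr _ Hb)).
Qed.

Definition counit_map (t : tensor H V) : V := tcontract t eps_form.

Lemma counit_map_hlin : @hlin _ _ D eps tensor_dimod M counit_map.
Proof. by []. Qed.

Lemma counit_map_coaction m : counit_map (coaction_map m) = m.
Proof. by rewrite /counit_map /= -{2}(coaction_counit m). Qed.

End Module.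

Section Functor.
Variables (M N : dimod D eps) (g : dm_sort M -> dm_sort N).
Hypothesis g_lin : linear g.

Definition tmap (t : tensor H (dm_sort M)) : tensor H (dm_sort N).
Proof.
exists (fun hs => g (tcontract t hs)).
case: (tcontractP t) => s Hs; exists [seq (p.1, g p.2) | p <- s] => hs.
rewrite Hs /contract big_map (lin_sum g_lin).
by apply: eq_bigr => p _; rewrite (linZ g_lin).
Defined.

Lemma tmap_tens y v : tmap (tens y v) = tens y (g v).
Proof. by apply: tensor_ext => hs /=; rewrite (linZ g_lin). Qed.

Lemma tmap_lin : linear tmap.
Proof. by move=> a x y; apply: tensor_ext => hs /=; rewrite g_lin. Qed.

Lemma tmap_dimor : hlin g -> @dimor _ _ D eps (tensor_dimod M) (tensor_dimod N) tmap.
Proof.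
move=> Hg; split; first split.
- exact: tmap_lin.
- by move=> m h; apply: tensor_ext => hs /=; rewrite (hlin_act Hg).
move=> t P b Hb; rewrite big_map.
have Hb' : bilin (fun x t' => b x (tmap t')).
  apply: bilinP => [t'|x]; first exact: bilin_linl Hb.
  exact: lin_comp (bilin_linr x Hb) tmap_lin.
rewrite /= (tcoact_sum Hb' (trepP t)).
rewrite (@tcoact_sum _ _ _ _ [seq (p.1, g p.2) | p <- trep t] Hb).
  rewrite big_map; apply: eq_bigr => p _; apply: eq_bigr => q _.
  by rewrite tmap_tens.
move=> hs; rewrite /= trepP /contract big_map (lin_sum g_lin).
by apply: eq_bigr => p _; rewrite (linZ g_lin).
Qed.

End Functor.

End TensorDimodule.

Section GammaFromSeparable.
Variables (k : comNzRingType) (H : algType k) (D : H -> seq (H * H))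
  (eps : H -> k) (S : H -> H).
Hypothesis hopf : is_hopf D eps S.
Hypothesis H_proj : projective_module H.
Variable P : forall M N : dimod D eps,
  (dm_sort M -> dm_sort N) -> (dm_sort M -> dm_sort N).
Hypothesis P_dimor : forall M N f, @hlin _ _ D eps M N f -> dimor (P f).
Hypothesis P_id : forall M N f, @dimor _ _ D eps M N f -> P f =1 f.
Hypothesis P_natural : forall (M M' N N' : dimod D eps)
  (g : dm_sort M' -> dm_sort M) (h : dm_sort N -> dm_sort N')
  (f : dm_sort M -> dm_sort N),
  dimor g -> dimor h -> hlin f -> P (h \o f \o g) =1 h \o P f \o g.

Local Notation HM := (tensor_dimod hopf H_proj).
Local Notation counit_map := (@counit_map _ _ _ _ _ hopf _).

Definition nu (M : dimod D eps) : dm_sort (HM M) -> dm_sort M :=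
  P (M := HM M) (N := M) counit_map.
Arguments nu : clear implicits.

Lemma nu_dimor M : @dimor _ _ D eps (HM M) M (nu M).
Proof. exact: P_dimor (counit_map_hlin hopf H_proj M). Qed.

Lemma nu_coaction_map M (m : dm_sort M) : nu M (coaction_map m) = m.
Proof.
have := P_natural (coaction_map_dimor hopf H_proj M) (dimor_id M)
  (counit_map_hlin hopf H_proj M) m.
have -> : id \o counit_map \o @coaction_map _ _ _ _ M = id.
  by apply: funext => x; apply: counit_map_coaction.
by rewrite /nu /= (P_id (dimor_id M)).
Qed.

Lemma nu_natural (M N : dimod D eps) (g : dm_sort M -> dm_sort N) (g_dimor : dimor g)
  (t : dm_sort (HM M)) : nu N (tmap (dimor_lin g_dimor) t) = g (nu M t).
Proof.
have Hg := tmap_dimor hopf H_proj (dimor_lin g_dimor) g_dimor.1.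
have E1 := P_natural Hg (dimor_id N) (counit_map_hlin hopf H_proj N) t.
have E2 := P_natural (dimor_id (HM M)) g_dimor (counit_map_hlin hopf H_proj M) t.
by rewrite /nu /= -[LHS]E1 E2.
Qed.

Definition regular_act (m h : H) : H := m * h.
Definition trivial_coact (m : H) : seq (H * H) := [:: (1, m)].

Lemma regular_dimod_axioms :
  @dimod_axioms _ _ D eps (H : lmodType k) regular_act trivial_coact.
Proof.
rewrite /regular_act /trivial_coact.
split; first by move=> a m m' h; rewrite mulrDl scalerAl.
split; first by move=> a m x y; rewrite mulrDr scalerAr.
split; first by move=> m; rewrite mulr1.
split; first by move=> m x y; rewrite mulrA.
split.
  move=> a m m' Q b Hb; rewrite /tscale /= !big_cons !big_nil !addr0 /=.
  by rewrite (bilin_linr _ Hb) (linZ (bilin_linl m Hb)).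
split.
  move=> m Q t Ht; rewrite !big_seq1 /=.
  by rewrite (Delta1 hopf (trilin_bilin12 Ht m)) !big_seq1.
split; first by move=> m; rewrite big_seq1 /= (eps1 hopf) scale1r.
by [].
Qed.

Definition regular_dimod : dimod D eps :=
  @Dimod _ _ D eps (H : lmodType k) regular_act trivial_coact regular_dimod_axioms.

Local Notation HH := (HM regular_dimod).

Definition sep_gamma (x y : H) : H :=
  tcontract (nu HH (tens x (tens y (1 : H)))) (eps_form hopf).

Lemma nu_contract_lin (hs : form H) :
  linear (fun t : dm_sort (HM HH) => tcontract (nu HH t) hs).
Proof. exact: lin_comp (tcontract_lin hs) (dimor_lin (nu_dimor HH)). Qed.

Lemma sep_gamma_linl l : linear (sep_gamma^~ l).
Proof.
move=> a x y; rewrite /sep_gamma (tens_linl (tens l (1 : H))).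
exact: nu_contract_lin.
Qed.

Lemma sep_gamma_linr x : linear (sep_gamma x).
Proof.
move=> a y y'; rewrite /sep_gamma (tens_linl (1 : H)) (tens_linr x).
exact: nu_contract_lin.
Qed.

Lemma lmul_dimor (z : H) : @dimor _ _ D eps regular_dimod regular_dimod ( *%R z).
Proof.
split; first split.
- by move=> a x y; rewrite mulrDr scalerAr.
- by move=> m h; rewrite /= /regular_act mulrA.
by [].
Qed.

(* Left multiplication by z is a dimodule map, so naturality of nu moves z
   across; H-linearity of nu moves it back as a right multiplication. *)
Lemma sep_gamma_central h l z : sep_gamma h l * z = z * sep_gamma h l.
Proof.
have Hz := tmap_dimor hopf H_proj (dimor_lin (lmul_dimor z)) (lmul_dimor z).1.
have := nu_natural Hz (tens h (tens l (1 : H))).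
rewrite !tmap_tens mulr1 => nat_z.
have := (nu_dimor HH).1.2 (tens h (tens l (1 : H))) z.
rewrite /= tact_tens /= tact_tens /= /regular_act mul1r => act_z.
by rewrite /sep_gamma -[_ * z]/(tcontract (tact (M := regular_dimod) _ z) _) -act_z nat_z.
Qed.

Lemma sep_gamma_counit h : \sum_(p <- D h) sep_gamma p.1 p.2 = eps h *: 1.
Proof.
have := nu_coaction_map (tens h (1 : H) : dm_sort HH).
rewrite coaction_map_tens (tcoact_tens hopf H_proj _ _ (tens_bilin _ _)) => nu_eta.
rewrite -[eps h *: 1]/(tcontract (tens h (1 : H)) (eps_form hopf)) -nu_eta.
by rewrite /tcoact_term (lin_sum (nu_contract_lin (eps_form hopf))).
Qed.

Section Harpoons.
Variables (hs : H -> k) (hs_lin : klinear_form hs).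
Let hs_form : form H := exist _ hs hs_lin.

Lemma lharp_lin : linear (lharp D hs).
Proof.
apply: (Delta_lin hopf (b := fun x y => hs y *: x)).
apply: bilinP => [y|x]; last exact: lin_form.
exact: (lin_scale (hs y) (f := fun v : H => v)).
Qed.

Definition form_lharp (hs' : form H) : form H.
Proof.
exists (fun u => sval hs' (lharp D hs u)).
by move=> a x y; rewrite lharp_lin (svalP hs').
Defined.

Lemma form_lharp_eps (t : tensor H H) :
  tcontract t (form_lharp (eps_form hopf)) = tcontract t hs_form.
Proof.
apply: tcontract_ext => u /=.
rewrite /lharp (form_sum (eps_lin hopf)).
under eq_bigr do rewrite (formZ (eps_lin hopf)).
rewrite -{2}(counitl hopf u) (form_sum hs_lin); apply: eq_bigr => p _.
by rewrite (formZ hs_lin) mulrC.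
Qed.

(* hs -> _ applied to the first tensor factor of H (x) H *)
Definition tlharp (t : tensor H H) : tensor H H.
Proof.
exists (fun hs' => tcontract t (form_lharp hs')).
exists [seq (lharp D hs p.1, p.2) | p <- trep t] => hs'.
by rewrite trepP /contract big_map.
Defined.

Lemma tlharp_tens y v : tlharp (tens y v) = tens (lharp D hs y) v.
Proof. by apply: tensor_ext. Qed.

Lemma tlharp_lin : linear tlharp.
Proof. by move=> a x y; apply: tensor_ext. Qed.

Lemma Delta_lharp (Q : lmodType k) (b : H -> H -> Q) u : bilin b ->
  \sum_(q <- D (lharp D hs u)) b q.1 q.2 = \sum_(q <- D u) b q.1 (lharp D hs q.2).
Proof.
move=> Hb; have HD := Delta_lin hopf Hb.
rewrite {1}/lharp (lin_sum HD); under eq_bigr do rewrite (linZ HD) scaler_sumr.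
under [RHS]eq_bigr do rewrite /lharp (lin_sum (bilin_linr _ Hb)).
under [RHS]eq_bigr do under eq_bigr do rewrite (linZ (bilin_linr _ Hb)).
have Ht : trilin (fun a b' c => hs c *: b a b').
  apply: trilinP => [b' c|a c|a b'].
  - exact: lin_scale (bilin_linl b' Hb).
  - exact: lin_scale (bilin_linr a Hb).
  - exact: lin_form.
exact: (coassoc hopf u Ht).
Qed.

Lemma tlharp_dimor : @dimor _ _ D eps HH HH tlharp.
Proof.
split; first split; [exact: tlharp_lin | by move=> m h; apply: tensor_ext |].
move=> t Q b Hb; rewrite big_map.
have Hb' : bilin (fun x t' => b x (tlharp t')).
  apply: bilinP => [t'|x]; first exact: bilin_linl Hb.
  exact: lin_comp (bilin_linr x Hb) tlharp_lin.
rewrite /= (@tcoact_sum _ _ _ _ _ hopf H_proj regular_dimod _ _ _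
  [seq (lharp D hs p.1, p.2) | p <- trep t] Hb); last first.
  by move=> hs'; rewrite /= trepP /contract big_map.
rewrite (@tcoact_sum _ _ _ _ _ hopf H_proj regular_dimod _ _ _ _ Hb' (trepP t)) big_map.
apply: eq_bigr => p _; rewrite /tcoact_term.
under [RHS]eq_bigr do rewrite tlharp_tens.
apply: (Delta_lharp (b := fun x y => b x (tens y p.2))).
apply: bilinP => [y|x]; first exact: bilin_linl Hb.
exact: lin_comp (bilin_linr x Hb) (tens_linl p.2).
Qed.

Lemma sep_gamma_lharp h l :
  tcontract (nu HH (tens h (tens l (1 : H)))) hs_form = sep_gamma h (lharp D hs l).
Proof.
have := nu_natural tlharp_dimor (tens h (tens l (1 : H))).
rewrite !tmap_tens tlharp_tens /sep_gamma => ->.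
by rewrite -form_lharp_eps.
Qed.

(* Colinearity of nu moves the contraction by hs onto the coaction of
   nu(h (x) l (x) 1), where the right counit law collapses it. *)
Lemma sep_gamma_rharp h l :
  sep_gamma (rharp D h hs) l = tcontract (nu HH (tens h (tens l (1 : H)))) hs_form.
Proof.
set w := tens h (tens l (1 : H)).
have Hb : bilin (fun (x : H) (c : tensor H H) => hs x *: tcontract c (eps_form hopf)).
  apply: bilinP => [c|x]; first exact: lin_form.
  exact: lin_scale (tcontract_lin _).
have Hb' : bilin (fun (x : H) (t : dm_sort (HM HH)) =>
    hs x *: tcontract (nu HH t) (eps_form hopf)).
  apply: bilinP => [t|x]; first exact: lin_form.
  exact: lin_scale (nu_contract_lin _).
rewrite /rharp (lin_sum (sep_gamma_linl l)).
under eq_bigr do rewrite (linZ (sep_gamma_linl l)).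
transitivity
  (\sum_(p <- tcoact (M := HH) w) hs p.1 *: tcontract (nu HH p.2) (eps_form hopf)).
  by rewrite (tcoact_tens hopf H_proj _ _ Hb').
rewrite -(dimor_coaction (nu_dimor HH) w Hb).
rewrite (@tcoact_sum _ _ _ _ _ hopf H_proj regular_dimod _ _ _ _ Hb (trepP _)).
rewrite trepP /contract; apply: eq_bigr => p _; rewrite /tcoact_term.
under eq_bigr do rewrite tcontract_tens /= scalerA.
rewrite -scaler_suml; congr (_ *: _).
change (\sum_(q <- D p.1) hs q.1 * eps q.2 = hs p.1).
rewrite -{2}(counitr hopf p.1) (form_sum hs_lin); apply: eq_bigr => q _.
by rewrite (formZ hs_lin) mulrC.
Qed.

Lemma sep_gamma_harp h l : sep_gamma (rharp D h hs) l = sep_gamma h (lharp D hs l).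
Proof. by rewrite sep_gamma_rharp sep_gamma_lharp. Qed.

End Harpoons.

Lemma sep_gammaP : gamma_condition D eps sep_gamma.
Proof.
split; first by move=> a x y l; apply: sep_gamma_linl.
split; first by move=> h a x y; apply: sep_gamma_linr.
split; first by move=> h hs Hhs l; apply: sep_gamma_harp.
split; first exact: sep_gamma_central.
exact: sep_gamma_counit.
Qed.

End GammaFromSeparable.

Theorem corollary3p7p1 (k : comNzRingType) (H : algType k)
    (D : H -> seq (H * H)) (eps : H -> k) (S : H -> H) :
  is_hopf D eps S -> projective_module H ->
  (forgetful_separable D eps <->
   exists gamma : H -> H -> H, gamma_condition D eps gamma).
Proof.
move=> hopf H_proj; split.
  case=> P [P_dimor [P_id P_natural]].
  by exists (sep_gamma hopf H_proj P); exact: sep_gammaP.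
by case=> gamma gammaP; exact: (forgetful_separable_of_gamma H_proj gammaP).
Qed.
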